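(* Let $m,n\geq 6$ and $r\geq 2$. Then $\varphi(\mathcal{P}^r_{m-5}\cup\mathcal{W}_{n-1},x)=\varphi(\mathcal{P}^r_{n-5}\cup\mathcal{W}_{m-1},x)$.
   Context: The loose path $\mathcal{P}^r_t=v_1e_1v_2\cdots v_te_tv_{t+1}$ of length $t\geq 1$ has edges $e_i=\{v_i,u_{i,1},\dots,u_{i,r-2},v_{i+1}\}$, all listed vertices distinct (for $r=2$ it is the ordinary path with $t$ edges). For $N\geq 5$, $\mathcal{W}_N$ is the $r$-uniform hypergraph obtained from the loose path $\mathcal{P}^r_{N-2}$ (vertices $v_1,\dots,v_{N-1}$) by attaching one pendent edge (an edge containing one existing vertex and $r-1$ new vertices) at $v_2$ and one at $v_{N-2}$. $\cup$ denotes disjoint union. For an $r$-uniform hypergraph $\mathcal{K}$ on $n'$ vertices, $m(\mathcal{K},k)$ is the number of sets of $k$ pairwise disjoint edges ($m(\mathcal{K},0)=1$) and $\varphi(\mathcal{K},x)=\sum_{k\geq0}(-1)^km(\mathcal{K},k)x^{n'-kr}$ is the matching polynomial. *)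

From mathcomp Require Import all_boot all_order all_algebra.
Set Implicit Arguments. Unset Strict Implicit. Unset Printing Implicit Defensive.
Import GRing.Theory.

Record hgraph := HGraph { hv : nat; he : {set {set 'I_hv}} }.

Definition mkH (n : nat) (es : seq (seq nat)) : hgraph :=
  @HGraph n [set:: map (fun e => [set i : 'I_n | (val i \in e)]) es].

Definition hunion (G1 G2 : hgraph) : hgraph :=
  @HGraph (hv G1 + hv G2)
    ([set (@lshift (hv G1) (hv G2)) @: e | e : {set 'I_(hv G1)} in he G1] :|:
     [set (@rshift (hv G1) (hv G2)) @: e | e : {set 'I_(hv G2)} in he G2]).

(* Loose path P^r_t: vertices 0 .. t(r-1); edge i = {i(r-1), ..., i(r-1)+(r-1)},
   so v_j is vertex (j-1)(r-1) and consecutive edges share exactly one vertex. *)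
Definition loose_edges (r t : nat) : seq (seq nat) :=
  [seq iota (i * r.-1) r | i <- iota 0 t].
Definition loose_path (r t : nat) : hgraph :=
  mkH (t * r.-1).+1 (loose_edges r t).

(* W_N: loose path P^r_(N-2) (path vertices v_1..v_(N-1), v_j = (j-1)(r-1)),
   plus a pendent edge at v_2 and one at v_(N-2), each with r-1 new vertices. *)
Definition W_hyp (r N : nat) : hgraph :=
  let b := ((N - 2) * r.-1).+1 in
  mkH (b + 2 * r.-1)
    (loose_edges r (N - 2) ++
     [:: r.-1 :: iota b r.-1 ;
         ((N - 3) * r.-1) :: iota (b + r.-1) r.-1]).

Definition match_count (G : hgraph) (k : nat) : nat :=
  #|[set S : {set {set 'I_(hv G)}} |
      [&& S \subset he G, #|S| == k &
          [forall e1 in S, forall e2 in S, (e1 != e2) ==> [disjoint e1 & e2]]]]|.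

(* Matching polynomial of an r-uniform hypergraph (k disjoint nonempty edges
   force k <= number of vertices, so the sum over k <= hv G is complete). *)
Definition match_poly (r : nat) (G : hgraph) : {poly int} :=
  (
  \sum_(k < (hv G).+1)
     ((-1) ^+ k * (match_count G k)%:R) *: 'X^(hv G - k * r))%R.

From mathcomp Require Import all_boot all_order all_algebra.
From mathcomp Require Import ring zify.
Set Implicit Arguments. Unset Strict Implicit. Unset Printing Implicit Defensive.
Import GRing.Theory.

(* The matching polynomial of an r-uniform hypergraph is determined by its
   number of vertices and by its matching generating polynomial
   Q(E) = sum of X^|S| over the matchings S of E.  Q is multiplicative on
   vertex-disjoint unions and obeys the deletion rule
   Q(e + E) = Q(E) + X Q(edges of E disjoint from e).  Peeling off the last
   edge of a loose path gives Q(P_t) = p_t with p_(t+1) = p_t + X p_(t-1);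
   deleting the two pendent edges of W_N then gives Q(W_N) = (1 + 4X) p_(N-4).
   So both hypergraphs of the theorem have Q = (1 + 4X) p_(m-5) p_(n-5) and
   (m + n - 6)(r - 1) + 2 vertices. *)

Lemma disjoint_self_eq0 (T : finType) (A : {set T}) : [disjoint A & A] -> A = set0.
Proof. by rewrite -setI_eq0 setIid => /eqP. Qed.

Section MatchingGenerator.
Variable T : finType.
Implicit Types (E A B S : {set {set T}}) (e : {set T}).

Definition matchings E := [set S : {set {set T}} | S \subset E & trivIset S].
Definition matchgen E : {poly int} := (\sum_(S in matchings E) 'X^#|S|)%R.

Lemma matchgen0 : matchgen set0 = 1%R.
Proof.
rewrite /matchgen (_ : matchings set0 = [set set0]) ?big_set1 ?cards0 ?expr0 //.
apply/setP => S; rewrite !inE subset0 andb_idr // => /eqP ->.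
by apply/trivIsetP => ? ?; rewrite inE.
Qed.

Lemma matchings_setU1 E e S : e \notin S ->
  (e |: S \in matchings (e |: E)) = (S \in matchings [set f in E | [disjoint f & e]]).
Proof.
move=> eS; rewrite !inE; apply/andP/andP => [[sub tri]|[sub tri]]; split.
- apply/subsetP => f fS; rewrite inE.
  have /setU1P[fe|fE] := subsetP sub f (setU1r e fS); first by rewrite -fe fS in eS.
  rewrite fE /=; apply: (trivIsetP tri); rewrite ?setU11 ?setU1r //.
  by apply/eqP => fe; rewrite -fe fS in eS.
- exact: trivIsetS (subsetUr _ _) tri.
- apply/subsetP => f /setU1P[->|fS]; first exact: setU11.
  by move/subsetP: sub => /(_ f fS); rewrite inE => /andP[/setU1r].
- apply/trivIsetP => f1 f2 /setU1P[->|f1S] /setU1P[->|f2S]; rewrite ?eqxx //.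
  + by move=> _; have := subsetP sub f2 f2S; rewrite inE disjoint_sym => /andP[].
  + by move=> _; have := subsetP sub f1 f1S; rewrite inE => /andP[].
  + exact: (trivIsetP tri).
Qed.

Lemma matchgenU1 E e : e \notin E ->
  matchgen (e |: E) = (matchgen E + 'X * matchgen [set f in E | [disjoint f & e]])%R.
Proof.
move=> eE; rewrite /matchgen (bigID (fun S => e \in S)) /= addrC; congr (_ + _)%R.
  apply: eq_bigl => S; rewrite !inE.
  have [eS|eS] := boolP (e \in S); rewrite ?andbF ?andbT.
    by rewrite (@contraNF (S \subset E) _ _ eE) // => /subsetP/(_ e eS).
  congr (_ && _); apply/idP/idP => /subsetP sub; apply/subsetP => f fS.
    by have /setU1P[fe|//] := sub f fS; rewrite -fe fS in eS.
  exact/setU1r/sub.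
rewrite mulr_sumr (reindex_onto (fun S => e |: S) (fun S => S :\ e)) /=; last first.
  by move=> S /andP[_ eS]; rewrite setD1K.
apply: eq_big => [S|S /andP[_ /eqP eS]].
  rewrite setU11 andbT; have [eS|eS] := boolP (e \in S).
    rewrite (_ : (e |: S) :\ e == S = false) ?andbF; last first.
      by apply: contraTF eS => /eqP <-; rewrite setD11.
    symmetry; apply/negbTE; rewrite inE; apply: contraNN eE => /andP[/subsetP/(_ e eS)].
    by rewrite inE => /andP[].
  by rewrite (setU1K eS) eqxx andbT matchings_setU1.
have eS' : e \notin S by rewrite -eS setD11.
by rewrite cardsU1 eS' add1n exprS.
Qed.

Lemma matchgenU A B :
    set0 \notin A -> {in A & B, forall a b : {set T}, [disjoint a & b]} ->
  matchgen (A :|: B) = (matchgen A * matchgen B)%R.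
Proof.
have [n] := ubnP #|A|; elim: n A => // n IH A.
have [->|[e eA]] := set_0Vmem A; first by rewrite set0U matchgen0 mul1r.
move=> ltA A0 AB.
have ltA' : #|A :\ e| < n := leq_trans (proper_card (properD1 eA)) ltA.
have eB : e \notin B.
  by apply: contraNN A0 => eB; rewrite -(disjoint_self_eq0 (AB e e eA eB)).
have AB' : {in A :\ e & B, forall a b : {set T}, [disjoint a & b]}.
  by move=> a b /setD1P[_ aA]; apply: AB.
have A0' : set0 \notin A :\ e by apply: contraNN A0 => /setD1P[].
rewrite -(setD1K eA) -setUA matchgenU1; last by rewrite in_setU (negbTE eB) setD11.
have -> : [set f in A :\ e :|: B | [disjoint f & e]] =
          [set f in A :\ e | [disjoint f & e]] :|: B.
  apply/setP => f; rewrite !inE; have [fB|fB] := boolP (f \in B).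
    by rewrite !orbT disjoint_sym AB.
  by rewrite !orbF.
rewrite matchgenU1 ?setD11 // !IH // ?mulrDl ?mulrA //.
- by apply: leq_ltn_trans ltA'; rewrite subset_leq_card // setIdE subsetIl.
- by apply: contraNN A0' => /setIdP[].
- by move=> a b /setIdP[aA _]; apply: AB'.
Qed.

End MatchingGenerator.

Section MatchgenImset.
Variables (T T' : finType) (h : T -> T').
Hypothesis h_inj : injective h.

Lemma matchings_imset (E : {set {set T}}) :
  matchings [set h @: e | e : {set T} in E] =
  [set [set h @: e | e : {set T} in S] | S : {set {set T}} in matchings E].
Proof.
apply/setP => S'; apply/idP/imsetP => [|[S + ->]]; rewrite !inE => /andP[sub tri].
  have S'E : S' = [set h @: e | e : {set T} in [set e : {set T} in E | h @: e \in S']].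
    apply/setP => x; apply/idP/imsetP => [xS|[e /setIdP[_ eS] ->//]].
    by have /imsetP[e eE xe] := subsetP sub x xS; exists e; rewrite // inE eE -xe.
  exists [set e : {set T} in E | h @: e \in S']; last exact: S'E.
  by rewrite inE -(imset_trivIset _ h_inj) -S'E tri andbT setIdE subsetIl.
by rewrite imsetS // imset_trivIset.
Qed.

Lemma matchgen_imset (E : {set {set T}}) :
  matchgen [set h @: e | e : {set T} in E] = matchgen E.
Proof.
rewrite /matchgen matchings_imset big_imset /=.
  by apply: eq_bigr => S _; rewrite card_imset //; apply: imset_inj.
by move=> S1 S2 _ _; apply/imset_inj/imset_inj.
Qed.

End MatchgenImset.

Lemma forall_disjointE (T : finType) (S : {set {set T}}) :
  [forall e1 in S, forall e2 in S, (e1 != e2) ==> [disjoint e1 & e2]] = trivIset S.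
Proof.
apply/forall_inP/trivIsetP => [P e1 e2 h1 h2|P e1 h1].
  by have /forall_inP/(_ e2 h2)/implyP := P e1 h1.
by apply/forall_inP => e2 h2; apply/implyP; apply: P.
Qed.

Lemma coef_matchgen G k : ((matchgen (he G))`_k = (match_count G k)%:R)%R.
Proof.
rewrite coef_sum; under eq_bigr => S _ do rewrite coefXn eq_sym.
rewrite -natr_sum -big_mkcondr sum1_card; congr (_%:R)%R; apply: eq_card => S.
by rewrite unfold_in !inE forall_disjointE andbAC -andbA.
Qed.

Lemma match_poly_eq r G1 G2 : hv G1 = hv G2 -> matchgen (he G1) = matchgen (he G2) ->
  match_poly r G1 = match_poly r G2.
Proof.
rewrite /match_poly => hv12 eqQ; rewrite hv12; apply: eq_bigr => k _.
by rewrite -!coef_matchgen eqQ.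
Qed.

Lemma matchgen_hunion G1 G2 : set0 \notin he G1 ->
  matchgen (he (hunion G1 G2)) = (matchgen (he G1) * matchgen (he G2))%R.
Proof.
move=> G10; rewrite matchgenU.
- by rewrite !matchgen_imset //; [apply: rshift_inj | apply: lshift_inj].
- by rewrite imset0mem.
move=> _ _ /imsetP[a _ ->] /imsetP[b _ ->].
rewrite -setI_eq0; apply/eqP/setP => v; rewrite !inE.
apply/andP => -[/imsetP[x _ ->] /imsetP[y _ /(congr1 val)/= xy]].
by have := ltn_ord x; rewrite xy ltnNge leq_addr.
Qed.

Fixpoint pathgen (t : nat) : {poly int} :=
  match t with
  | 0 => 1
  | 1 => 1 + 'X
  | (t'.+1 as t1).+1 => pathgen t1 + 'X * pathgen t'
  end%R.

(* For t = 0 this reads p_1 = p_0 + X p_0, thanks to the truncated 0.-1 = 0. *)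
Lemma pathgenS t : pathgen t.+1 = (pathgen t + 'X * pathgen t.-1)%R.
Proof. by case: t => [|t] //; rewrite mulr1. Qed.

Lemma pathgen_pendants t : 2 < t ->
  (pathgen t + 'X * pathgen (t - 2) + 'X * (pathgen (t - 2) + 'X * pathgen (t - 4))
   = (1 + 4%:R * 'X) * pathgen (t - 2))%R.
Proof. by case: t => [|[|[|t]]] // _; rewrite !subSS !subn0 !pathgenS /= subn1; ring. Qed.

Section Chain.
Variables (T : finType) (c : nat -> {set T}) (N : nat).
Hypothesis disjoint_c : forall i j, i < j < N -> [disjoint c i & c j] = (i.+1 < j).
Hypothesis c_neq : forall i j, i < j < N -> c i != c j.

Definition chain lo d := [set:: [seq c i | i <- iota lo d]].

Lemma chainP lo d x : reflect (exists2 i, lo <= i < lo + d & x = c i) (x \in chain lo d).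
Proof.
by rewrite inE; apply: (iffP mapP) => -[i hi ->]; exists i; rewrite ?mem_iota in hi *.
Qed.

Lemma chainS lo d : chain lo d.+1 = c (lo + d) |: chain lo d.
Proof. by apply/setP => x; rewrite /chain -addn1 iotaD map_cat !inE mem_cat inE orbC. Qed.

Lemma notin_chain x lo d : (forall i, lo <= i < lo + d -> x != c i) ->
  x \notin chain lo d.
Proof. by move=> xc; apply/chainP => -[i /xc/eqP]. Qed.

Lemma chain_disjoint (y : {set T}) lo d lo' d' : lo <= lo' -> lo' + d' <= lo + d ->
    (forall i, lo <= i < lo + d -> [disjoint c i & y] = (lo' <= i < lo' + d')) ->
  [set x in chain lo d | [disjoint x & y]] = chain lo' d'.
Proof.
move=> lolo' led' cy; apply/setP => x; rewrite inE.
apply/andP/chainP => [[/chainP[i hi ->]]|[i hi ->]].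
  by rewrite cy // => ?; exists i.
have hi' : lo <= i < lo + d by lia.
by split; [apply/chainP; exists i | rewrite cy].
Qed.

Lemma matchgen_chain lo d : lo + d <= N -> matchgen (chain lo d) = pathgen d.
Proof.
elim/ltn_ind: d => -[|d] IH ledN; first by rewrite /chain set_nil matchgen0.
rewrite chainS matchgenU1; last by apply: notin_chain => i hi; rewrite eq_sym c_neq //; lia.
rewrite (chain_disjoint (lo' := lo) (d' := d.-1)) ?IH ?pathgenS //; try lia.
move=> i hi; rewrite disjoint_c; lia.
Qed.

Variables f g : {set T}.
Hypothesis N_gt2 : 2 < N.
Hypothesis disjoint_f : forall i, i < N -> [disjoint c i & f] = (1 < i).
Hypothesis disjoint_g : forall i, i < N -> [disjoint c i & g] = (i < N - 2).
Hypothesis disjoint_gf : [disjoint g & f].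
Hypothesis f_neq : forall i, i < N -> f != c i.
Hypothesis g_neq : forall i, i < N -> g != c i.
Hypothesis fg_neq : f != g.

Lemma matchgen_chain_pendant lo d : lo + d = N ->
  matchgen (g |: chain lo d) = (pathgen d + 'X * pathgen (d - 2))%R.
Proof.
move=> dN; rewrite matchgenU1; last by apply: notin_chain => i hi; apply: g_neq; lia.
rewrite (chain_disjoint (lo' := lo) (d' := d - 2)) ?matchgen_chain //; try lia.
by move=> i hi; rewrite disjoint_g; lia.
Qed.

Lemma matchgen_chain_pendants :
  matchgen (f |: (g |: chain 0 N)) = ((1 + 4%:R * 'X) * pathgen (N - 2))%R.
Proof.
rewrite matchgenU1; last first.
  by rewrite in_setU1 negb_or fg_neq; apply: notin_chain => i hi; apply: f_neq.
have -> : [set x in g |: chain 0 N | [disjoint x & f]] =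
          g |: [set x in chain 0 N | [disjoint x & f]].
  by apply/setP => x; rewrite !inE; case: eqP => // ->; rewrite disjoint_gf.
rewrite (chain_disjoint (lo' := 2) (d' := N - 2)); try lia; last first.
  by move=> i hi; rewrite disjoint_f; lia.
rewrite !matchgen_chain_pendant; try lia.
by rewrite -subnDA -pathgen_pendants.
Qed.

End Chain.

Definition vset n (l : seq nat) : {set 'I_n} := [set i : 'I_n | val i \in l].

Lemma vset_disjoint n l1 l2 : {in l1, forall v, v \notin l2} ->
  [disjoint vset n l1 & vset n l2].
Proof.
move=> l12; rewrite -setI_eq0; apply/eqP/setP => i; rewrite !inE.
by apply/negP => /andP[/l12/negP].
Qed.

Lemma vset_meet n l1 l2 v : v < n -> v \in l1 -> v \in l2 ->
  [disjoint vset n l1 & vset n l2] = false.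
Proof.
move=> vn v1 v2; apply/negP; rewrite -setI_eq0 => /eqP/setP/(_ (Ordinal vn)).
by rewrite !inE v1 v2.
Qed.

Lemma vset_neq n l1 l2 v : v < n -> v \in l1 -> v \notin l2 -> vset n l1 != vset n l2.
Proof.
by move=> vn v1 v2; apply/eqP => /setP/(_ (Ordinal vn)); rewrite !inE v1 (negbTE v2).
Qed.

Lemma leq_mulSl i j k : i < j -> i * k + k <= j * k.
Proof. by move=> ij; rewrite addnC -mulSn leq_mul2r ij orbT. Qed.

Section LoosePath.
Variables r n : nat.
Hypothesis r_gt1 : 1 < r.

Definition loose_edge i := vset n (iota (i * r.-1) r).

Lemma disjoint_loose_edge t i j : t * r.-1 < n -> i < j < t ->
  [disjoint loose_edge i & loose_edge j] = (i.+1 < j).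
Proof.
move=> tn /andP[ij jt].
have le_ij := leq_mulSl r.-1 ij; have le_jt := leq_mulSl r.-1 jt.
have [ij'|ji] := ltnP i.+1 j; last first.
  have ej : j = i.+1 by lia.
  by apply: (@vset_meet _ _ _ (j * r.-1)); rewrite ?mem_iota ej ?mulSn; lia.
have := leq_mulSl r.-1 ij'; rewrite mulSn => le_ij'.
by apply: vset_disjoint => v; rewrite !mem_iota; lia.
Qed.

Lemma loose_edge_neq t i j : t * r.-1 < n -> i < j < t -> loose_edge i != loose_edge j.
Proof.
move=> tn /andP[ij jt].
have le_ij := leq_mulSl r.-1 ij; have le_jt := leq_mulSl r.-1 jt.
by apply: (@vset_neq _ _ _ (i * r.-1)); rewrite ?mem_iota; lia.
Qed.

End LoosePath.

Lemma he_loose_path r t : he (loose_path r t) = chain (loose_edge r (t * r.-1).+1) 0 t.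
Proof. by rewrite /loose_path /mkH /loose_edges /chain /= -map_comp. Qed.

Lemma matchgen_loose_path r t : 1 < r -> matchgen (he (loose_path r t)) = pathgen t.
Proof.
move=> r_gt1; rewrite he_loose_path (@matchgen_chain _ _ t) //.
  by move=> i j; apply: disjoint_loose_edge.
by move=> i j; apply: loose_edge_neq.
Qed.

Lemma set0_notin_loose_path r t : 1 < r -> set0 \notin he (loose_path r t).
Proof.
move=> r_gt1; rewrite he_loose_path; apply/chainP => -[i /andP[_ it]] /esym/setP.
have := leq_mulSl r.-1 it => le_it.
have vn : i * r.-1 < (t * r.-1).+1 by lia.
by move/(_ (Ordinal vn)); rewrite !inE mem_iota leqnn /=; lia.
Qed.

Section WHyp.
Variables r N : nat.
Hypotheses (r_gt1 : 1 < r) (N_gt4 : 4 < N).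
Local Notation k := r.-1.
Local Notation b := ((N - 2) * k).+1.
Local Notation n := (b + 2 * k).
Local Notation c := (loose_edge r n).
Let f := vset n (k :: iota b k).
Let g := vset n ((N - 3) * k :: iota (b + k) k).

Let kk_le_N3k : k + k <= (N - 3) * k.
Proof. have /(leq_mulSl k) : 1 < N - 3 by lia. by rewrite mul1n. Qed.

Lemma he_W_hyp : he (W_hyp r N) = f |: (g |: chain c 0 (N - 2)).
Proof.
apply/setP => x; rewrite /W_hyp /mkH /chain /loose_edges /= map_cat -map_comp.
by rewrite !inE mem_cat !inE orbC -orbA.
Qed.

Lemma disjoint_edge_f i : i < N - 2 -> [disjoint c i & f] = (1 < i).
Proof.
move=> iN; have le_iN := leq_mulSl k iN.
have [i_gt1|i_le1] := ltnP 1 i.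
  have := leq_mulSl k i_gt1; rewrite mul1n => le_1i.
  by apply: vset_disjoint => v; rewrite in_cons !mem_iota; lia.
apply: (@vset_meet _ _ _ k); rewrite ?mem_head ?mem_iota //; first lia.
have [->|->] : i = 0 \/ i = 1 by lia.
  by rewrite mul0n; lia.
by rewrite mul1n; lia.
Qed.

Lemma disjoint_edge_g i : i < N - 2 -> [disjoint c i & g] = (i < N - 2 - 2).
Proof.
move=> iN; have le_iN := leq_mulSl k iN.
have [i_lt|i_ge] := ltnP i (N - 2 - 2).
  have /(leq_mulSl k) : i.+1 < N - 3 by lia.
  rewrite mulSn => le_i3.
  by apply: vset_disjoint => v; rewrite in_cons !mem_iota; lia.
apply: (@vset_meet _ _ _ ((N - 3) * k)); rewrite ?mem_head ?mem_iota //; first lia.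
have [->|->] : i = N - 3 \/ i = N - 4 by lia.
  lia.
have -> : N - 3 = (N - 4).+1 by lia.
by rewrite mulSn; lia.
Qed.

Lemma disjoint_g_f : [disjoint g & f].
Proof. by apply: vset_disjoint => v; rewrite !in_cons !mem_iota; lia. Qed.

Lemma f_neq_edge i : i < N - 2 -> f != c i.
Proof.
move=> iN; have le_iN := leq_mulSl k iN.
by apply: (@vset_neq _ _ _ b); rewrite ?in_cons ?mem_iota; lia.
Qed.

Lemma g_neq_edge i : i < N - 2 -> g != c i.
Proof.
move=> iN; have le_iN := leq_mulSl k iN.
by apply: (@vset_neq _ _ _ (b + k)); rewrite ?in_cons ?mem_iota; lia.
Qed.

Lemma f_neq_g : f != g.
Proof. by apply: (@vset_neq _ _ _ b); rewrite ?in_cons ?mem_iota; lia. Qed.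

Lemma matchgen_W_hyp :
  matchgen (he (W_hyp r N)) = ((1 + 4%:R * 'X) * pathgen (N - 4))%R.
Proof.
have N2 : N - 4 = N - 2 - 2 by lia.
rewrite he_W_hyp N2 matchgen_chain_pendants //; try lia.
- by move=> i j ij; apply: (@disjoint_loose_edge r _ r_gt1 (N - 2)) => //=; lia.
- by move=> i j ij; apply: (@loose_edge_neq r _ r_gt1 (N - 2)) => //=; lia.
- exact: disjoint_edge_f.
- exact: disjoint_edge_g.
- exact: disjoint_g_f.
- exact: f_neq_edge.
- exact: g_neq_edge.
- exact: f_neq_g.
Qed.
End WHyp.

Theorem lemma10 (m n r : nat) :
  (6 <= m)%N -> (6 <= n)%N -> (2 <= r)%N ->
  match_poly r (hunion (loose_path r (m - 5)) (W_hyp r (n - 1))) =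
  match_poly r (hunion (loose_path r (n - 5)) (W_hyp r (m - 1))).
Proof.
move=> m_ge6 n_ge6 r_gt1; apply: match_poly_eq.
  rewrite /=; have -> : n - 1 - 2 = n - 5 + 2 by lia.
  have -> : m - 1 - 2 = m - 5 + 2 by lia.
  by rewrite !mulnDl; lia.
rewrite !matchgen_hunion ?set0_notin_loose_path // !matchgen_loose_path //.
rewrite !matchgen_W_hyp -?subnDA ?add1n; try lia.
by rewrite mulrCA [RHS]mulrCA (mulrC (pathgen (m - 5))).
Qed.
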